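(* Fix a positive integer $l$ and $\rho\in\mathcal C$. For every $n\ge1$ let $\pi_n$ be a random permutation in $S_n$ with law $\mathbb P_n$, such that \[ \lim_{n\to\infty}\sup_{\mathbf p,\mathbf q\in\mathcal S(n,l)}\left|\frac{n^l\,\mathbb P_n(\pi_n(\mathbf p)=\mathbf q)}{\prod_{a=1}^l\rho\left(\frac{p_a}{n},\frac{q_a}{n}\right)}-1\right|=0. \] Suppose $\mathbf p_n\in\mathcal S(n,l)$ satisfies $\frac1n\mathbf p_n\to\mathbf x=(x_1,\dots,x_l)\in[0,1]^l$. Then $\frac1n\pi_n(\mathbf p_n)$ converges in distribution to $(Y(x_1),\dots,Y(x_l))$, where $Y(x_1),\dots,Y(x_l)$ are mutually independent and $Y(x_a)$ has density $\rho(x_a,\cdot)$ on $[0,1]$.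
   Context: $[n]=\{1,\dots,n\}$. $\mathcal S(n,l)=\{\mathbf p=(p_1,\dots,p_l)\in[n]^l: p_a\ne p_b \text{ for } a\ne b\}$; for a permutation $\pi_n$, $\pi_n(\mathbf p)=(\pi_n(p_1),\dots,\pi_n(p_l))$. $\mathcal C$ is the set of strictly positive continuous functions $\rho$ on $[0,1]^2$ with $\int_0^1\rho(x,y)\,dx=\int_0^1\rho(x,y)\,dy=1$ for all $x,y$. *)

From HB Require Import structures.
From mathcomp Require Import all_boot all_order all_algebra all_fingroup.
From mathcomp Require Import all_classical all_reals all_analysis.
Set Implicit Arguments. Unset Strict Implicit. Unset Printing Implicit Defensive.
Import Order.TTheory GRing.Theory Num.Theory.
Import numFieldNormedType.Exports.
Local Open Scope classical_set_scope.
Local Open Scope ring_scope.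

Section Defs.
Variable R : realType.

Definition in_class_C (rho : R -> R -> R) : Prop :=
  [/\ forall x y, x \in `[0%R, 1%R] -> y \in `[0%R, 1%R] -> 0 < rho x y,
      {within `[0%R, 1%R] `*` `[0%R, 1%R], continuous (fun z : R * R => rho z.1 z.2)},
      (forall x, x \in `[0%R, 1%R] ->
         (\int[@lebesgue_measure R]_(y in `[0%R, 1%R]) (rho x y)%:E = 1%E)%E) &
      (forall y, y \in `[0%R, 1%R] ->
         (\int[@lebesgue_measure R]_(x in `[0%R, 1%R]) (rho x y)%:E = 1%E)%E)].

(* A law of a random permutation of [n] (permutations of 'I_n, i.e. of
   {0,..,n-1}; element k of [n] corresponds to the ordinal k-1). *)
Definition is_perm_law n (P : {ffun {perm 'I_n} -> R}) : Prop :=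
  (forall s, 0 <= P s) /\ \sum_s P s = 1.

(* S(n,l), encoded 0-based: injective maps 'I_l -> 'I_n
   (p_a in [n] corresponds to the ordinal p_a - 1). *)
Definition Sinj n l : {set {ffun 'I_l -> 'I_n}} :=
  [set f : {ffun 'I_l -> 'I_n} | injectiveb f].

Definition prob_map n l (P : {ffun {perm 'I_n} -> R})
  (p q : {ffun 'I_l -> 'I_n}) : R :=
  \sum_(s : {perm 'I_n} | [forall a, s (p a) == q a]) P s.

Definition deviation (rho : R -> R -> R) n l (P : {ffun {perm 'I_n} -> R})
  (p q : {ffun 'I_l -> 'I_n}) : R :=
  `| (n%:R ^+ l * prob_map P p q) /
       (\prod_(a < l) rho ((p a).+1%:R / n%:R) ((q a).+1%:R / n%:R)) - 1 |.

(* sup over p, q in S(n,l) (a finite maximum of nonnegative reals) *)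
Definition sup_deviation (rho : R -> R -> R) n l (P : {ffun {perm 'I_n} -> R}) : R :=
  \big[Num.max/0]_(p in Sinj n l) \big[Num.max/0]_(q in Sinj n l)
     deviation rho P p q.

(* pi applied to an element k of [n] = {1,..,n} *)
Definition perm_app n (s : {perm 'I_n}) (k : nat) : nat :=
  match @insub nat (fun i => i < n)%N _ k.-1 with
  | Some i => (s i).+1
  | None => k
  end.

Definition cdf_scaled_image n l (P : {ffun {perm 'I_n} -> R}) (p : 'I_l -> nat)
  (t : 'rV[R]_l) : R :=
  \sum_(s : {perm 'I_n} | [forall a, (perm_app s (p a))%:R / n%:R <= t ord0 a]) P s.

Definition cdf_Y (rho : R -> R -> R) (x s : R) : R :=
  fine (\int[@lebesgue_measure R]_(y in `[0%R, 1%R] `&` `]-oo, s%R]) (rho x y)%:E).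

Definition cdf_indep_Y (rho : R -> R -> R) l (x : 'I_l -> R) (t : 'rV[R]_l) : R :=
  \prod_(a < l) cdf_Y rho (x a) (t ord0 a).

Definition cvg_in_distribution l (F : nat -> 'rV[R]_l -> R) (G : 'rV[R]_l -> R) : Prop :=
  forall t : 'rV[R]_l, {for t, continuous G} -> F n t @[n --> \oo] --> G t.

End Defs.

From HB Require Import structures.
From mathcomp Require Import all_boot all_order all_algebra all_fingroup.
From mathcomp Require Import all_classical all_reals all_analysis.
From mathcomp Require Import ring lra measurable_realfun.
Import Order.TTheory GRing.Theory Num.Theory.
Import numFieldNormedType.Exports.
Local Open Scope classical_set_scope.
Local Open Scope ring_scope.

(* Write q = pi_n(p_n) and, for every q in [n]^l (injective or not),
   w(q) = n^-l prod_a rho(p_a/n, q_a/n).  On injective tuples the hypothesis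
   gives P_n(q) = w(q) (1 + O(delta_n)), so the two laws differ there by at
   most M^l delta_n in total variation, M bounding rho.  Since w has total
   mass tending to 1, the non-injective tuples carry vanishing w-mass, and the
   distribution function of q/n at t is within 2 M^l delta_n + (w([n]^l) - 1)
   of w(q/n <= t).  The latter factorises as a product over a of right-endpoint
   Riemann sums of rho(p_a/n, .) on [0, t_a], each of which tends to
   P(Y(x_a) <= t_a) by continuity of rho and dominated convergence. *)

Section unit_square.
Context {R : realType} {f : R -> R -> R}.
Hypothesis f_cont :
  {within `[0%R, 1%R] `*` `[0%R, 1%R], continuous (fun z : R * R => f z.1 z.2)}.

Lemma unit_square_continuous_dist {z e} : (`[0%R, 1%R] `*` `[0%R, 1%R]) z -> 0 < e ->
  exists2 d : R, 0 < d & forall w, (`[0%R, 1%R] `*` `[0%R, 1%R]) w ->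
    `|w.1 - z.1| < d -> `|w.2 - z.2| < d -> `|f z.1 z.2 - f w.1 w.2| < e.
Proof.
move=> Az e0; move/subspace_continuousP: f_cont => /(_ z Az).
move/cvgrPdist_lt => /(_ e e0) /nbhs_ballP[d d0 fd].
by exists d => // w Aw w1 w2; apply: fd Aw; split; rewrite /ball /= distrC.
Qed.

Lemma unit_square_bounded :
  exists2 M : R, 0 <= M & forall a b, a \in `[0%R, 1%R] -> b \in `[0%R, 1%R] ->
    `|f a b| <= M.
Proof.
have : compact ((fun z : R * R => f z.1 z.2) @` (`[0%R, 1%R] `*` `[0%R, 1%R])).
  by apply: continuous_compact => //; apply: compact_setX; exact: segment_compact.
move/compact_bounded => [M [_ fM]]; exists (`|M| + 1); first by rewrite addr_ge0.
move=> a b a01 b01; apply: fM; first by rewrite (le_lt_trans (ler_norm M)) ?ltrDl.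
by exists (a, b) => //; split.
Qed.

Lemma unit_square_continuous_slice {x} : x \in `[0%R, 1%R] ->
  {within `[0%R, 1%R], continuous (f x)}.
Proof.
move=> x01; apply/subspace_continuousP => y y01; apply/cvgrPdist_lt => e e0.
have xy : (`[0%R, 1%R] `*` `[0%R, 1%R]) (x, y) by split.
have [d d0 fd] := unit_square_continuous_dist xy e0.
apply/nbhs_ballP; exists d => // w yw w01; apply: (fd (x, w)) => /=.
- by split.
- by rewrite subrr normr0.
- by move: yw; rewrite /ball /= distrC.
Qed.

End unit_square.

Section riemann_sum.
Context {R : realType}.
Implicit Types (n k : nat) (y t : R) (F : nat -> R) (g : R -> R).

Definition cell n k : set R := `](k%:R / n%:R), (k.+1%:R / n%:R)].

Lemma cell_inj {n k k' y} : (0 < n)%N -> cell n k y -> cell n k' y -> k = k'.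
Proof.
move=> n0; rewrite /cell /= !in_itv /= => /andP[a b] /andP[c d].
have n0' : (0 : R) < n%:R by rewrite ltr0n.
rewrite ltr_pdivrMr // in a; rewrite ler_pdivlMr // in b.
rewrite ltr_pdivrMr // in c; rewrite ler_pdivlMr // in d.
have h1 : (k%:R < k'.+1%:R :> R) by apply: lt_le_trans a d.
have h2 : (k'%:R < k.+1%:R :> R) by apply: lt_le_trans c b.
rewrite !ltr_nat !ltnS in h1 h2.
by apply/eqP; rewrite eqn_leq h1 h2.
Qed.

Lemma cell_cover n y : (0 < n)%N -> 0 < y -> exists k, cell n k y.
Proof.
move=> n0 y0; set m := Num.ceil (y * n%:R).
have ny0 : 0 < y * n%:R by rewrite mulr_gt0 // ltr0n.
have m0 : (0 < m)%R.
  by rewrite -(ltr0z R); apply: lt_le_trans ny0 _; exact: ceil_ge.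
have [k mk] : exists k, m = k.+1%:Z by case: m m0 => [[|k]|] //; exists k.
exists k; rewrite /cell /= in_itv /=; apply/andP; split.
  rewrite ltr_pdivrMr ?ltr0n //.
  by have := ceilB1_lt (y * n%:R); rewrite -/m mk -addn1 PoszD addrK.
by rewrite ler_pdivlMr ?ltr0n //; have := ceil_ge (y * n%:R); rewrite -/m mk.
Qed.

Lemma measurable_cell n k : measurable (cell n k).
Proof. exact: measurable_itv. Qed.

Lemma lebesgue_measure_cell n k : (0 < n)%N ->
  lebesgue_measure (cell n k) = (n%:R^-1 : R)%:E.
Proof.
move=> n0; rewrite /cell lebesgue_measure_itv /= lte_fin.
rewrite ltr_pM2r ?invr_gt0 ?ltr0n // ltr_nat ltnSn.
by rewrite -EFinD -mulrBl -natrB // subSnn mul1r.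
Qed.

Definition step n F y : R := \sum_(k < n) F k * \1_(cell n k) y.

Lemma step_cell {n} F {y k} : (k < n)%N -> cell n k y -> step n F y = F k.
Proof.
move=> kn yk; rewrite /step (bigD1 (Ordinal kn)) //= indicE mem_set // mulr1.
rewrite big1 ?addr0 // => j /eqP jk; rewrite indicE memNset ?mulr0 // => yj.
apply: jk; apply: val_inj; apply: (cell_inj _ yj yk).
exact: leq_ltn_trans kn.
Qed.

Lemma norm_step_le n F M y : 0 <= M -> (forall k : 'I_n, `|F k| <= M) ->
  `|step n F y| <= M.
Proof.
move=> M0 FM; have [[k yk]|ny] := pselect (exists k : 'I_n, cell n k y).
  by rewrite (step_cell _ (ltn_ord k) yk) FM.
rewrite /step big1 ?normr0 // => k _.
by rewrite indicE memNset ?mulr0 // => yk; apply: ny; exists k.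
Qed.

Lemma measurable_step n F D : measurable_fun D (step n F).
Proof.
apply: measurable_sum => k; apply: measurable_funM; first exact: measurable_cst.
by apply: measurable_indic; exact: measurable_cell.
Qed.

Lemma integral_step {n F D} : measurable D -> (0 < n)%N ->
  (forall k : 'I_n, 0 <= F k) -> (forall k : 'I_n, F k != 0 -> cell n k `<=` D) ->
  (\int[@lebesgue_measure R]_(y in D) (step n F y)%:E =
   (\sum_(k < n) F k / n%:R)%:E)%E.
Proof.
move=> mD n0 F0 FD; under eq_integral do rewrite /step -sumEFin.
have mI k : measurable_fun D (fun y => (\1_(cell n k) y : R)%:E).
  by apply/measurable_EFinP; apply: measurable_indic; exact: measurable_cell.
have I0 k y : D y -> (0 <= (\1_(cell n k) y : R)%:E)%E by rewrite lee_fin.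
have mFk k : measurable_fun D (fun y => (F k * \1_(cell n k) y)%:E).
  by under eq_fun do rewrite EFinM; exact: measurable_funeM.
have Fk0 (k : 'I_n) y : D y -> (0 <= (F k * \1_(cell n k) y)%:E)%E.
  by move=> _; rewrite lee_fin mulr_ge0.
rewrite ge0_integral_sum //; last by move=> k; exact: mFk.
rewrite -sumEFin; apply: eq_bigr => k _.
under eq_integral do rewrite EFinM.
rewrite ge0_integralZl_EFin //; last exact: mI.
rewrite integral_indic //; last exact: measurable_cell.
have [->|Fk] := eqVneq (F k) 0; first by rewrite mul0r mul0e.
rewrite setIidl; last exact: FD.
by rewrite EFinM; congr (_ * _)%E; exact: lebesgue_measure_cell.
Qed.

Definition rsample n g t k : R :=
  if k.+1%:R / n%:R <= t then g (k.+1%:R / n%:R) else 0.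

Definition riemann_sum n g t : R := \sum_(k < n) rsample n g t k / n%:R.

Lemma ratio_in_unit {k n} : (0 < n)%N -> (k <= n)%N -> (k%:R / n%:R : R) \in `[0%R, 1%R].
Proof.
move=> n0 kn; rewrite in_itv /= divr_ge0 //=.
by rewrite ler_pdivrMr ?ltr0n // mul1r ler_nat.
Qed.

Lemma endpoint_in_unit {n k} : (k < n)%N -> (k.+1%:R / n%:R : R) \in `[0%R, 1%R].
Proof. by move=> kn; apply: ratio_in_unit (leq_ltn_trans (leq0n k) kn) kn. Qed.

Lemma near_inv_natr_lt (d : R) : 0 < d ->
  \forall n \near \oo, 0 < (n%:R : R) /\ (n%:R : R)^-1 < d.
Proof.
move=> d0; apply: filterS (nbhs_infty_gtr d^-1) => m dm.
have m0 : (0 : R) < m%:R by apply: lt_trans dm; rewrite invr_gt0.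
by split => //; rewrite invf_plt ?posrE.
Qed.

Section riemann_sum_cvg.
Context {f : R -> R -> R} {u : nat -> R} {x t : R}.
Hypothesis f_cont :
  {within `[0%R, 1%R] `*` `[0%R, 1%R], continuous (fun z : R * R => f z.1 z.2)}.
Hypothesis f_ge0 : forall a b, a \in `[0%R, 1%R] -> b \in `[0%R, 1%R] -> 0 <= f a b.
Hypothesis u01 : forall n, u n \in `[0%R, 1%R].
Hypothesis u_cvg : u n @[n --> \oo] --> x.
Hypothesis x01 : x \in `[0%R, 1%R].

Let D : set R := `[0%R, 1%R] `&` `]-oo, t].

Let measurableD : measurable D.
Proof. by apply: measurableI; exact: measurable_itv. Qed.

Lemma integral_riemann_step n : (0 < n)%N ->
  (\int[@lebesgue_measure R]_(y in D) (step n (rsample n (f (u n)) t) y)%:E =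
   (riemann_sum n (f (u n)) t)%:E)%E.
Proof.
move=> n0; apply: (integral_step measurableD n0) => k; rewrite /rsample.
  by case: ifP => // _; apply: f_ge0 => //; exact: endpoint_in_unit.
case: ifP => [kt _|]; last by rewrite eqxx.
have /[!in_itv] /andP[_ k1] /= := endpoint_in_unit (ltn_ord k).
move=> y; rewrite /cell /= in_itv /= => /andP[ky yk]; split => /=.
  rewrite in_itv /= (le_trans yk k1) andbT; apply: ltW; apply: le_lt_trans ky.
  by rewrite divr_ge0.
by rewrite in_itv /= (le_trans yk kt).
Qed.

Lemma cvg_riemann_step y : 0 < y <= 1 -> y < t ->
  step n (rsample n (f (u n)) t) y @[n --> \oo] --> f x y.
Proof.
move=> /andP[y0 y1] yt; apply/cvgrPdist_lt => e e0.
have xy : (`[0%R, 1%R] `*` `[0%R, 1%R]) (x, y).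
  by split => /=; [exact: x01 | rewrite in_itv /= y1 ltW].
have [d d0 fd] := unit_square_continuous_dist f_cont xy e0.
move/cvgrPdist_lt: u_cvg => /(_ d d0) u_near.
near=> n.
have [n0 nd] : 0 < (n%:R : R) /\ (n%:R : R)^-1 < d by near: n; exact: near_inv_natr_lt.
have [_ nty] : 0 < (n%:R : R) /\ (n%:R : R)^-1 < t - y.
  by near: n; apply: near_inv_natr_lt; rewrite subr_gt0.
have xu : `|x - u n| < d by near: n.
have [k yk] : exists k, cell n k y by apply: cell_cover y0; rewrite -(ltr0n R).
have := yk; rewrite /cell /= in_itv /= => /andP[ky yk1].
have kS : (k.+1%:R / n%:R : R) = k%:R / n%:R + n%:R^-1 by rewrite -natr1 mulrDl mul1r.
have kn : (k < n)%N.
  rewrite -(ltr_nat R); move: ky; rewrite ltr_pdivrMr // => ky.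
  by apply: lt_le_trans ky _; rewrite ler_piMl.
have kt : (k.+1%:R / n%:R : R) <= t by rewrite kS; apply: ltW; lra.
rewrite (step_cell _ kn yk) /rsample kt.
apply: (fd (u n, k.+1%:R / n%:R)) => /=.
- by split; [exact: u01 | exact: endpoint_in_unit].
- by rewrite distrC.
- by rewrite ger0_norm ?subr_ge0 //; lra.
Unshelve. all: end_near. Qed.

Lemma cvg_riemann_sum : riemann_sum n (f (u n)) t @[n --> \oo] -->
  fine (\int[@lebesgue_measure R]_(y in `[0%R, 1%R] `&` `]-oo, t]) (f x y)%:E).
Proof.
pose g n y := step n (rsample n (f (u n)) t) y.
have [M M0 fM] := unit_square_bounded f_cont.
have D01 : D `<=` `[0%R, 1%R] by move=> y [].
have mfx : measurable_fun D (EFin \o f x).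
  apply: (measurable_funS _ D01); first exact: measurable_itv.
  apply: (measurable_int (@lebesgue_measure R)).
  apply: continuous_compact_integrable; first exact: segment_compact.
  by apply: unit_square_continuous_slice.
have int_M : (@lebesgue_measure R).-integrable D (cst M%:E).
  eapply integrableS; [ | | exact: D01 | ].
  - exact: measurable_itv.
  - exact: measurableD.
  - apply: (@continuous_compact_integrable _ (cst M)); first exact: segment_compact.
    by apply: continuous_subspaceT; exact: cst_continuous.
have mg n : measurable_fun D (EFin \o g n).
  by apply/measurable_EFinP; exact: measurable_step.
have gM : {ae @lebesgue_measure R, forall y n, D y -> (`|(EFin \o g n) y| <= cst M%:E y)%E}.
  apply: aeW => y n _; rewrite /= lee_fin; apply: norm_step_le => // k.
  rewrite /rsample; case: ifP => _; last by rewrite normr0.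
  by apply: fM; [exact: u01 | exact: endpoint_in_unit].
have g_cvg : {ae @lebesgue_measure R, forall y, D y ->
    (EFin \o g n) y @[n --> \oo] --> (EFin \o f x) y}.
  (* 0 lies in no cell, and at y = t the sample at the right endpoint may be cut. *)
  exists ([set 0%R] `|` [set t]); split.
  - by apply: measurableU; exact: measurable_set1.
  - by apply: null_set_setU; (exact: measurable_set1 || exact: lebesgue_measure_set1).
  move=> y; apply: contra_notP => y0t [] /=; rewrite !in_itv /= => /andP[y0 y1] yt.
  apply/fine_cvgP; split; first exact: nearW.
  apply: cvg_riemann_step.
    by rewrite y1 andbT lt_neqAle y0 andbT; apply/eqP => y_eq0; apply: y0t; left.
  by rewrite lt_neqAle yt andbT; apply/eqP => t_eq; apply: y0t; right.
have [int_fx _] := @dominated_convergence _ _ _ (@lebesgue_measure R) D measurableD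
  (fun n => EFin \o g n) (EFin \o f x) (cst M%:E) mg mfx g_cvg int_M gM.
have fin_fx : (\int[@lebesgue_measure R]_(y in D) (EFin \o f x) y)%E \is a fin_num.
  by apply: (integrable_fin_num _ int_fx); apply: measurableI; exact: measurable_itv.
rewrite -(fineK fin_fx) => /fine_cvgP[_].
apply: cvg_trans; apply: near_eq_cvg; near=> n.
have n0 : (0 < n)%N by near: n; exists 1%N.
by rewrite /= integral_riemann_step.
Unshelve. all: end_near. Qed.

End riemann_sum_cvg.

Lemma cvg_riemann_sum_near (f : R -> R -> R) (u : nat -> R) (x t : R) :
  {within `[0%R, 1%R] `*` `[0%R, 1%R], continuous (fun z : R * R => f z.1 z.2)} ->
  (forall a b, a \in `[0%R, 1%R] -> b \in `[0%R, 1%R] -> 0 <= f a b) ->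
  (\forall n \near \oo, u n \in `[0%R, 1%R]) -> u n @[n --> \oo] --> x ->
  x \in `[0%R, 1%R] ->
  riemann_sum n (f (u n)) t @[n --> \oo] -->
  fine (\int[@lebesgue_measure R]_(y in `[0%R, 1%R] `&` `]-oo, t]) (f x y)%:E).
Proof.
move=> f_cont f_ge0 u01 u_cvg x01.
pose v n := if u n \in `[0%R, 1%R] then u n else x.
have v01 n : v n \in `[0%R, 1%R] by rewrite /v; case: ifP.
have uv : \forall n \near \oo, u n = v n by apply: filterS u01 => n u01n; rewrite /v u01n.
have v_cvg : v n @[n --> \oo] --> x by apply: cvg_trans u_cvg; exact: near_eq_cvg.
apply: cvg_trans (cvg_riemann_sum f_cont f_ge0 v01 v_cvg x01).
by apply: near_eq_cvg; apply: filterS uv => n ->.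
Qed.

End riemann_sum.

Section restricted_mass.
Context {R : realDomainType} {I : finType}.

Lemma sum_cond_le (A : {set I}) (C : pred I) (F : I -> R) : (forall i, 0 <= F i) ->
  \sum_(i in A | C i) F i <= \sum_(i in A) F i.
Proof.
move=> F0; rewrite [leRHS](bigID C) /= lerDl.
by apply: sumr_ge0 => i _; exact: F0.
Qed.

Lemma dist_sum_restrict_le {S : {set I}} {C : pred I} {a w : I -> R} :
  (forall i, 0 <= w i) -> \sum_(i in S) a i = 1 ->
  `|\sum_(i in S | C i) a i - \sum_(i | C i) w i| <=
    2 * \sum_(i in S) `|a i - w i| + (\sum_i w i - 1).
Proof.
move=> w0 a1; set E := \sum_(i in S) `|a i - w i|.
have splitS (Q : pred I) : \sum_(i | Q i) w i =
    \sum_(i in S | Q i) w i + \sum_(i in ~: S | Q i) w i.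
  rewrite (bigID (mem S)) /=.
  by congr (_ + _); apply: eq_bigl => i; rewrite ?inE andbC.
have in_S : `|\sum_(i in S | C i) (a i - w i)| <= E.
  apply: le_trans (ler_norm_sum _ _ _) _; apply: sum_cond_le => i.
  exact: normr_ge0.
(* The w-mass off S is (sum w - 1) plus the defect 1 - sum_S w of w on S. *)
have mass_S : 1 - \sum_(i in S) w i <= E.
  by rewrite -a1 -sumrB; apply: le_trans (ler_norm _) (ler_norm_sum _ _ _).
have out_S0 : 0 <= \sum_(i in ~: S | C i) w i by apply: sumr_ge0.
have out_S : \sum_(i in ~: S | C i) w i <= \sum_(i in ~: S) w i by exact: sum_cond_le.
have := splitS predT; rewrite !(eq_bigl _ _ (fun i => andbT _)) => mass_w.
rewrite splitS opprD addrA -sumrB.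
apply: le_trans (ler_normB _ _) _; rewrite (ger0_norm out_S0); lra.
Qed.

End restricted_mass.

Lemma perm_appS n (s : {perm 'I_n}) (i : 'I_n) : perm_app s i.+1 = (s i).+1.
Proof.
rewrite /perm_app /=; case: insubP => [j _ ji|]; first by rewrite (val_inj ji).
by rewrite ltn_ord.
Qed.

Lemma ffun_ord_pred {n l} {p : 'I_l -> nat} :
  (forall a, (1 <= p a <= n)%N) -> injective p ->
  exists2 pn : {ffun 'I_l -> 'I_n}, injective pn & forall a, (pn a).+1 = p a.
Proof.
move=> p_range p_inj.
have lt_n a : ((p a).-1 < n)%N by case/andP: (p_range a) => p1 pn; rewrite prednK.
pose pn := [ffun a => Ordinal (lt_n a)].
have pnS a : (pn a).+1 = p a by rewrite ffunE /= prednK //; case/andP: (p_range a).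
by exists pn => // a b pn_ab; apply: p_inj; rewrite -pnS pn_ab pnS.
Qed.

Section grid_weight.
Variables (R : realType) (rho : R -> R -> R) (n l : nat) (pn : {ffun 'I_l -> 'I_n}).
Implicit Type q : {ffun 'I_l -> 'I_n}.

Definition grid_density q : R :=
  \prod_(a < l) rho ((pn a).+1%:R / n%:R) ((q a).+1%:R / n%:R).

Definition grid_weight q : R := grid_density q / n%:R ^+ l.

Lemma prod_riemann_sum_grid (c : 'I_l -> R) :
  \prod_(a < l) riemann_sum n (rho ((pn a).+1%:R / n%:R)) (c a) =
  \sum_(q : {ffun 'I_l -> 'I_n} | [forall a, (q a).+1%:R / n%:R <= c a]) grid_weight q.
Proof.
rewrite [RHS]big_mkcond /riemann_sum bigA_distr_bigA /=; apply: eq_bigr => q _.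
case: ifP => [/forallP qc | /negbT].
  rewrite big_split /= prodr_const card_ord exprVn; congr (_ * _).
  by apply: eq_bigr => a _; rewrite /rsample qc.
by rewrite negb_forall => /existsP[a qa]; rewrite (bigD1 a) //= /rsample (negbTE qa) !mul0r.
Qed.

Variables (P : {ffun {perm 'I_n} -> R}) (M : R).
Hypothesis pn_inj : injective pn.
Hypothesis rho_gt0 : forall x y, x \in `[0%R, 1%R] -> y \in `[0%R, 1%R] -> 0 < rho x y.
Hypothesis rhoM : forall x y, x \in `[0%R, 1%R] -> y \in `[0%R, 1%R] -> `|rho x y| <= M.

Lemma grid_density_gt0 q : 0 < grid_density q.
Proof. by apply: prodr_gt0 => a _; apply: rho_gt0; exact: endpoint_in_unit. Qed.

Lemma grid_density_le q : grid_density q <= M ^+ l.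
Proof.
rewrite -[l in M ^+ l]card_ord -prodr_const; apply: ler_prod => a _.
rewrite ltW /=; last by apply: rho_gt0; exact: endpoint_in_unit.
by apply: le_trans (ler_norm _) _; apply: rhoM; exact: endpoint_in_unit.
Qed.

Lemma grid_weight_ge0 q : 0 <= grid_weight q.
Proof. by rewrite divr_ge0 ?exprn_ge0 // ltW ?grid_density_gt0. Qed.

Let pn_in_Sinj : pn \in Sinj n l.
Proof. by rewrite inE; apply/injectiveP. Qed.

Let natr_expn_neq0 : n%:R ^+ l != 0 :> R.
Proof.
have [->|l0] := posnP l; first by rewrite expr0 oner_neq0.
by rewrite expf_neq0 // pnatr_eq0 -lt0n (leq_ltn_trans _ (ltn_ord (pn (Ordinal l0)))).
Qed.

Lemma sum_prob_map_Sinj (C : pred {ffun 'I_l -> 'I_n}) :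
  \sum_(q in Sinj n l | C q) prob_map P pn q =
  \sum_(s : {perm 'I_n} | C [ffun a => s (pn a)]) P s.
Proof.
rewrite [RHS](partition_big (fun s : {perm 'I_n} => [ffun a => s (pn a)])
   (fun q => (q \in Sinj n l) && C q)) /=; last first.
  move=> s Cs; rewrite Cs andbT inE; apply/injectiveP => a b.
  by rewrite !ffunE => /perm_inj; exact: pn_inj.
apply: eq_bigr => q /andP[_ Cq]; apply: eq_bigl => s.
rewrite andbC; case: eqP => [sq|ne] /=.
  by rewrite sq Cq; apply/forallP => a; rewrite -sq ffunE.
by apply/negbTE/forallP => sq; apply: ne; apply/ffunP => a; rewrite ffunE; exact/eqP.
Qed.

Lemma deviation_le_sup {q} : q \in Sinj n l ->
  deviation rho P pn q <= sup_deviation rho l P.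
Proof.
move=> qS; apply: le_trans (le_bigmax_cond _ _ pn_in_Sinj).
exact: (le_bigmax_cond _ (fun q => deviation rho P pn q) qS).
Qed.

Lemma dist_prob_map_grid_weight_le {q} : q \in Sinj n l ->
  `|prob_map P pn q - grid_weight q| <= M ^+ l * sup_deviation rho l P / n%:R ^+ l.
Proof.
move=> qS; have dev := deviation_le_sup qS; have w0 := grid_density_gt0 q.
have -> : prob_map P pn q - grid_weight q =
    grid_density q / n%:R ^+ l * ((n%:R ^+ l * prob_map P pn q) / grid_density q - 1).
  by rewrite /grid_weight; field; rewrite natr_expn_neq0 gt_eqF.
rewrite normrM ger0_norm ?divr_ge0 ?exprn_ge0 ?(ltW w0) // mulrAC.
apply: ler_wpM2r; first by rewrite invr_ge0 exprn_ge0.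
exact: ler_pM (ltW w0) (normr_ge0 _) (grid_density_le q) dev.
Qed.

Lemma sum_dist_prob_map_grid_weight_le :
  \sum_(q in Sinj n l) `|prob_map P pn q - grid_weight q| <= M ^+ l * sup_deviation rho l P.
Proof.
set K := M ^+ l * sup_deviation rho l P / n%:R ^+ l.
have K0 : 0 <= K := le_trans (normr_ge0 _) (dist_prob_map_grid_weight_le pn_in_Sinj).
apply: (@le_trans _ _ (\sum_(q in Sinj n l) K)).
  by apply: ler_sum => q; exact: dist_prob_map_grid_weight_le.
rewrite sumr_const; apply: (@le_trans _ _ (K *+ n ^ l)).
  apply: ler_wpMn2l => //.
  by have := max_card (mem (Sinj n l)); rewrite card_ffun !card_ord.
by rewrite -mulr_natr natrX divfK.
Qed.

Lemma cdf_scaled_image_grid_approx (t : 'rV[R]_l) : is_perm_law P ->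
  `|cdf_scaled_image P (fun a => (pn a).+1) t -
    \prod_(a < l) riemann_sum n (rho ((pn a).+1%:R / n%:R)) (t ord0 a)| <=
  2 * (M ^+ l * sup_deviation rho l P) +
  (\prod_(a < l) riemann_sum n (rho ((pn a).+1%:R / n%:R)) 1 - 1).
Proof.
move=> [_ P1]; rewrite !prod_riemann_sum_grid.
have -> : cdf_scaled_image P (fun a => (pn a).+1) t =
    \sum_(q in Sinj n l | [forall a, (q a).+1%:R / n%:R <= t ord0 a]) prob_map P pn q.
  rewrite sum_prob_map_Sinj; apply: eq_bigl => s.
  by apply: eq_forallb => a; rewrite perm_appS ffunE.
have mass1 : \sum_(q in Sinj n l) prob_map P pn q = 1.
  by rewrite -P1 -(sum_prob_map_Sinj predT); apply: eq_bigl => q; rewrite andbT.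
have -> : \sum_(q : {ffun 'I_l -> 'I_n} | [forall a, (q a).+1%:R / n%:R <= 1 :> R])
      grid_weight q = \sum_q grid_weight q.
  apply: eq_bigl => q; apply/forallP => a.
  by have /[!in_itv] /andP[] := endpoint_in_unit (R := R) (ltn_ord (q a)).
apply: le_trans (dist_sum_restrict_le grid_weight_ge0 mass1) _.
by rewrite lerD2r ler_pM2l //; exact: sum_dist_prob_map_grid_weight_le.
Qed.

End grid_weight.

Lemma cdf_scaled_image_riemann_approx {R : realType} (rho : R -> R -> R) (M : R) n l
    (P : {ffun {perm 'I_n} -> R}) (p : 'I_l -> nat) (t : 'rV[R]_l) :
  (forall x y, x \in `[0%R, 1%R] -> y \in `[0%R, 1%R] -> 0 < rho x y) ->
  (forall x y, x \in `[0%R, 1%R] -> y \in `[0%R, 1%R] -> `|rho x y| <= M) ->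
  is_perm_law P -> (forall a, (1 <= p a <= n)%N) -> injective p ->
  `|cdf_scaled_image P p t -
    \prod_(a < l) riemann_sum n (rho ((p a)%:R / n%:R)) (t ord0 a)| <=
  2 * (M ^+ l * sup_deviation rho l P) +
  (\prod_(a < l) riemann_sum n (rho ((p a)%:R / n%:R)) 1 - 1).
Proof.
move=> rho_gt0 rhoM P_law p_range p_inj.
have [pn pn_inj pnS] := ffun_ord_pred p_range p_inj.
have -> : p = (fun a => (pn a).+1) by apply: funext => a; rewrite pnS.
exact: cdf_scaled_image_grid_approx.
Qed.

Lemma cdf_Y_1 {R : realType} (rho : R -> R -> R) (x : R) :
  in_class_C rho -> x \in `[0%R, 1%R] -> cdf_Y rho x 1 = 1.
Proof.
move=> [_ _ rho_int _] x01; rewrite /cdf_Y setIidl ?rho_int //.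
by move=> y /=; rewrite !in_itv /= => /andP[].
Qed.

Lemma cvg_prod_riemann_sum {R : realType} {rho : R -> R -> R} {l}
    {u : 'I_l -> nat -> R} {x : 'I_l -> R} (c : 'I_l -> R) : in_class_C rho ->
  (forall a, \forall n \near \oo, u a n \in `[0%R, 1%R]) ->
  (forall a, u a n @[n --> \oo] --> x a) -> (forall a, x a \in `[0%R, 1%R]) ->
  \prod_(a < l) riemann_sum n (rho (u a n)) (c a) @[n --> \oo] -->
  \prod_(a < l) cdf_Y rho (x a) (c a).
Proof.
move=> [rho_gt0 rho_cont _ _] u01 u_cvg x01.
apply: (cvg_big mul_continuous) => // a _.
apply: cvg_riemann_sum_near (u01 a) (u_cvg a) (x01 a) => // y z y01 z01.
exact/ltW/rho_gt0.
Qed.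

Lemma cvg_near_dist_le {R : realFieldType} {u w v : nat -> R} {c : R} :
  (\forall n \near \oo, `|u n - w n| <= v n) ->
  w n @[n --> \oo] --> c -> v n @[n --> \oo] --> 0 -> u n @[n --> \oo] --> c.
Proof.
move=> uwv w_cvg v_cvg; apply/cvgrPdist_le => e e0.
have e2 : 0 < e / 2 by rewrite divr_gt0.
near=> n; rewrite (splitr e); apply: le_trans (ler_distD (w n) _ _) (lerD _ _).
  by near: n; exact: cvgr_dist_le.
rewrite distrC; apply: (@le_trans _ _ (v n)); first by near: n.
by apply: le_trans (ler_norm _) _; near: n; exact: cvgr0_norm_le.
Unshelve. all: end_near. Qed.

Theorem corollary1p2 (R : realType) (l : nat) (rho : R -> R -> R)
  (P : forall n : nat, {ffun {perm 'I_n} -> R})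
  (p : nat -> 'I_l -> nat) (x : 'I_l -> R) :
  (0 < l)%N ->
  in_class_C rho ->
  (forall n, (1 <= n)%N -> is_perm_law (P n)) ->
  sup_deviation rho l (P n) @[n --> \oo] --> 0 ->
  (forall n, (l <= n)%N ->
     (forall a, (1 <= p n a <= n)%N) /\ injective (p n)) ->
  (forall a, x a \in `[0%R, 1%R]) ->
  (forall a, (p n a)%:R / n%:R @[n --> \oo] --> x a) ->
  cvg_in_distribution (fun n => cdf_scaled_image (P n) (p n)) (cdf_indep_Y rho x).
Proof.
(* Convergence holds at every t, continuity point of the limit or not. *)
move=> l0 rhoC P_law dev_cvg p_range x01 px_cvg t _.
have [rho_gt0 rho_cont _ _] := rhoC.
have [M _ rhoM] := unit_square_bounded rho_cont.
have near_l : \forall n \near \oo, (l <= n)%N by exists l.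
have p01 a : \forall n \near \oo, ((p n a)%:R / n%:R : R) \in `[0%R, 1%R].
  apply: filterS near_l => n ln; have [/(_ a)/andP[p1 pn] _] := p_range n ln.
  exact: ratio_in_unit (leq_trans p1 pn) pn.
pose T c n := \prod_(a < l) riemann_sum n (rho ((p n a)%:R / n%:R)) (c a).
have T_cvg c := cvg_prod_riemann_sum c rhoC p01 px_cvg x01.
apply: (cvg_near_dist_le (w := T (t ord0))
  (v := fun n => 2 * (M ^+ l * sup_deviation rho l (P n)) + (T (fun=> 1) n - 1))).
- apply: filterS near_l => n ln; have [p_range_n p_inj] := p_range n ln.
  apply: cdf_scaled_image_riemann_approx => //.
  by apply: P_law; exact: leq_trans ln.
- exact: T_cvg.
have -> : (0 : R) = 2 * (M ^+ l * 0) + (\prod_(a < l) cdf_Y rho (x a) 1 - 1).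
  by rewrite big1 => [|a _]; rewrite ?cdf_Y_1 ?mulr0 ?subrr ?addr0.
apply: cvgD; last by apply: cvgB; [exact: T_cvg | exact: cvg_cst].
by apply: cvgM; [exact: cvg_cst | apply: cvgM => //; exact: cvg_cst].
Qed.
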